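(* $\mathtt{incl}$-$\mathtt{ESO}$-$\mathtt{HORN}\subseteq\mathtt{Trellis}$.
   Context: Fix a finite alphabet $\Sigma$. A nonempty word $w=w_1\cdots w_n$ is represented by the structure $\langle w\rangle=([1,n];(Q_s)_{s\in\Sigma},\mathtt{min},\mathtt{max},\mathtt{suc},\mathtt{pred})$ with $Q_s(i)\iff w_i=s$, $\mathtt{min}(i)\iff i=1$, $\mathtt{max}(i)\iff i=n$, $\mathtt{suc}(i)=\min(i+1,n)$, $\mathtt{pred}(i)=\max(i-1,1)$. For an integer $a$, $x+a$ denotes $\mathtt{suc}^a(x)$ if $a\ge0$ and $\mathtt{pred}^{-a}(x)$ if $a<0$; $y-b=\mathtt{pred}^b(y)$. An inclusion Horn formula is $\Phi=\exists\mathbf{R}\forall x\forall y\,\psi(x,y)$, $\mathbf{R}$ a finite set of binary relation symbols, $\psi$ a conjunction of Horn clauses over $\{(Q_s)_{s\in\Sigma},\mathtt{min},\mathtt{max},\mathtt{suc},\mathtt{pred}\}\cup\mathbf{R}\cup\{=,\le,<\}$, each of the form $x\le y\wedge\delta_1\wedge\cdots\wedge\delta_r\to\delta_0$ with $\delta_0$ an atom $R(x,y)$ ($R\in\mathbf{R}$) or $\bot$, each $\delta_i$ one of: $U(x+a)$, $\neg U(x+a)$, $U(y+a)$, $\neg U(y+a)$ for $U\in\{(Q_s)_{s\in\Sigma},\mathtt{min},\mathtt{max}\}$, $a\in\mathbb Z$; $x=y$ or $x<y$; $S(x+a,y-b)\wedge x+a\le y-b$ with $S\in\mathbf{R}$,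 $a,b\ge0$. $\mathtt{incl}$-$\mathtt{ESO}$-$\mathtt{HORN}$ is the class of languages $\{w\in\Sigma^+:\langle w\rangle\models\Phi\}$. A one-way cellular automaton (OCA) is $(Q,\Sigma,Q_{accept},\{-1,0\},\delta)$ with finite $Q\supseteq\Sigma$, $Q_{accept}\subseteq Q$, $\delta:Q^2\to Q$; on input $w=w_1\cdots w_n$ it uses cells $1,\dots,n$ (cells outside permanently in a state $\sharp$), with $\langle c,1\rangle=w_c$ and $\langle c,t\rangle=\delta(\langle c-1,t-1\rangle,\langle c,t-1\rangle)$ for $t>1$. $\mathtt{Trellis}$ is the class of languages $L\subseteq\Sigma^+$ such that some OCA satisfies $w\in L\iff\langle n,n\rangle\in Q_{accept}$ for all $w$ of length $n$ (equivalently, languages accepted by trellis automata). *)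

From Stdlib Require List.
From mathcomp Require Import all_boot all_algebra.
Set Implicit Arguments. Unset Strict Implicit. Unset Printing Implicit Defensive.

Inductive upred (S : Type) := UQ of S | Umin | Umax.
Arguments Umin {S}. Arguments Umax {S}.

Inductive var := Vx | Vy.

Inductive hyp (S : Type) (k : nat) :=
| HLit of bool & upred S & var & int
    (* HLit true U v a  = U(v+a);  HLit false U v a = ¬U(v+a) *)
| HEq
| HLt
| HRel of 'I_k & nat & nat.
    (* HRel R a b = R(x+a, y-b) ∧ x+a ≤ y-b, with a,b ≥ 0 *)
Arguments HEq {S k}. Arguments HLt {S k}.

(* Horn clause  x ≤ y ∧ δ_1 ∧ ... ∧ δ_r → δ_0 ; head None = ⊥ *)
Record clause (S : Type) (k : nat) := Clause {
  body : seq (hyp S k);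
  head : option 'I_k }.

(* Φ = ∃R ∀x∀y ψ(x,y), ψ a conjunction of Horn clauses *)
Record formula (S : Type) := Formula {
  nrel : nat;
  clauses : seq (clause S nrel) }.

(* x + a = suc^a(x) (a ≥ 0) or pred^(-a)(x) (a < 0), on domain [1,n] *)
Definition shift (n p : nat) (a : int) : nat :=
  match a with
  | Posz m => minn (p + m) n
  | Negz m => maxn (p - m.+1) 1
  end.

Definition upred_holds (S : finType) (w : seq S) (U : upred S) (i : nat) : bool :=
  match U with
  | UQ s => onth w i.-1 == Some s   (* w_i = s, positions 1-based *)
  | Umin => i == 1
  | Umax => i == size w
  end.

Definition var_val (x y : nat) (v : var) : nat :=
  match v with Vx => x | Vy => y end.

Definition hyp_holds (S : finType) (k : nat) (w : seq S)
  (R : 'I_k -> nat -> nat -> Prop) (x y : nat) (h : hyp S k) : Prop :=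
  match h with
  | HLit b U v a => upred_holds w U (shift (size w) (var_val x y v) a) = b
  | HEq => x = y
  | HLt => x < y
  | HRel T a b =>
      let p := shift (size w) x (Posz a) in
      let q := maxn (y - b) 1 in  (* y - b = pred^b(y) *)
      R T p q /\ p <= q
  end.

Definition clause_holds (S : finType) (k : nat) (w : seq S)
  (R : 'I_k -> nat -> nat -> Prop) (x y : nat) (c : clause S k) : Prop :=
  x <= y ->
  (forall h, List.In h (body c) -> hyp_holds w R x y h) ->
  match head c with
  | Some T => R T x y
  | None => False
  end.

Definition models (S : finType) (w : seq S) (Phi : formula S) : Prop :=
  exists R : 'I_(nrel Phi) -> nat -> nat -> Prop,
    forall x y, 0 < x <= size w -> 0 < y <= size w ->
      forall c, List.In c (clauses Phi) -> clause_holds w R x y c.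

Definition incl_ESO_HORN (S : finType) (L : seq S -> Prop) : Prop :=
  ~ L [::] /\
  exists Phi : formula S, forall w, w <> [::] -> (L w <-> models w Phi).

Record OCA (S : finType) := MkOCA {
  state : finType;
  inp : S -> state;          (* the inclusion Σ ⊆ Q *)
  sharp : state;             (* the permanent state of cells outside [1,n] *)
  accepting : pred state;
  delta : state -> state -> state }.

(* conf A w t c = <c, t+1> : state of cell c at time t+1 *)
Fixpoint conf (S : finType) (A : OCA S) (w : seq S) (t c : nat) : state A :=
  match t with
  | 0 => if c is c'.+1 then
           (match onth w c' with Some s => @inp S A s | None => @sharp S A end)
         else @sharp S A
  | t'.+1 => if c is c'.+1 then @delta S A (@conf S A w t' c') (@conf S A w t' c)
             else @sharp S A
  end.

Definition oca_accepts (S : finType) (A : OCA S) (w : seq S) : bool :=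
  @accepting S A (@conf S A w (size w).-1 (size w)).

Definition Trellis (S : finType) (L : seq S -> Prop) : Prop :=
  ~ L [::] /\
  exists A : OCA S,
    injective (@inp S A) /\ (forall s, @inp S A s <> @sharp S A) /\
    forall w, w <> [::] -> (L w <-> oca_accepts A w).

From Pilot Require Import Defs.
From mathcomp Require Import all_boot all_algebra.
From mathcomp Require Import zify.
From Stdlib Require Import ClassicalEpsilon.
Set Implicit Arguments. Unset Strict Implicit. Unset Printing Implicit Defensive.

(* Let [A] bound the offsets occurring in Phi and put [K = A + 2].  Every
   relational hypothesis [R(x + a, y - b)] refers to a subinterval of [[x, y]],
   so by induction on the length of an interval, the least interpretation of
   the relation symbols on an interval of [w] depends only on the letters of
   the interval and on the [K] letters on either side of it; the same holds
   for the violation of a clause with head [⊥].  The signature of a factor [u]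
   therefore only needs its first and last [K] letters and, for every pair of
   contexts of length at most [K], the least facts on the intervals obtained
   from [u] by removing at most [A] positions at either end, together with
   whether a [⊥]-clause is violated inside [u].  The signature of [a u b] is
   determined by those of [a u] and [u b], so a trellis automaton can compute
   the signature of the factor below each of its cells, and the signature of
   the whole word decides whether [<w> |= Phi]. *)

Lemma onth_rev (T : Type) (s : seq T) j : j < size s ->
  onth (rev s) j = onth s (size s - j.+1).
Proof. by move=> lt_js; rewrite !onthE map_rev nth_rev ?size_map. Qed.

Lemma onth_take_eq (T : Type) n (s s' : seq T) i :
  take n s = take n s' -> i < n -> onth s i = onth s' i.
Proof.
move=> eq_take lt_in.
have onth_take u : onth (take n u) i = onth u i by rewrite !onthE map_take nth_take.
by rewrite -onth_take eq_take onth_take.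
Qed.

Lemma take_cat_eq (T : Type) n (s t t' : seq T) :
  take n t = take n t' -> take n (s ++ t) = take n (s ++ t').
Proof.
move=> eq_t; rewrite !take_cat; case: ltnP => // _.
by rewrite -(take_takel _ (leq_subr (size s) n)) eq_t take_takel ?leq_subr.
Qed.

Lemma take_eq_short (T : Type) n (s s' : seq T) :
  take n s = take n s' -> size s < n -> s = s'.
Proof.
move=> eq_take lt_sn; have := congr1 size eq_take; rewrite !size_take_min => eq_size.
by rewrite -(take_oversize (ltnW lt_sn)) eq_take take_oversize //; lia.
Qed.

Lemma size_take_leq (T : Type) n (s : seq T) : size (take n s) <= n.
Proof. by rewrite size_take_min geq_minl. Qed.

Definition take_bseq (T : Type) n (s : seq T) : n.-bseq T := Bseq (size_take_leq n s).

Lemma take_drop_succ (T : Type) (w : seq T) i t : i + t.+1 < size w ->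
  exists a u b, [/\ take t.+2 (drop i w) = a :: rcons u b,
    take t.+1 (drop i w) = a :: u & take t.+1 (drop i.+1 w) = rcons u b].
Proof.
move=> lt_it_w; have : t < size (drop i.+1 w) by rewrite size_drop; lia.
rewrite -[i.+1]add1n -drop_drop.
case: (drop i w) => [|a g] //= lt_t_g; rewrite drop0 in lt_t_g *.
by exists a, (take t g), (nth a g t); rewrite -!take_nth.
Qed.

Lemma In_leq_sumn (T : Type) (f : T -> nat) s x : List.In x s -> f x <= sumn (map f s).
Proof.
elim: s => [|y s IH] //= [-> | /IH]; first exact: leq_addr.
by move/leq_trans; apply; apply: leq_addl.
Qed.

Definition truth (P : Prop) : bool := if excluded_middle_informative P then true else false.

Lemma truthP (P : Prop) : reflect P (truth P).
Proof. by rewrite /truth; case: excluded_middle_informative => ?; constructor. Qed.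

Lemma truth_eq (P Q : Prop) : truth P = truth Q <-> (P <-> Q).
Proof.
split=> [e | PQ]; last by apply/idP/idP => /truthP/PQ/truthP.
by split=> /truthP; [rewrite e | rewrite -e] => /truthP.
Qed.

(** * Trellis automata computing a congruent signature *)

Section TrellisOfSignature.

Variables (S F : finType) (sig : seq S -> F).

Hypothesis sig_letter_inj : forall s s', sig [:: s] = sig [:: s'] -> s = s'.

Hypothesis sig_cong : forall a u b a' u' b',
  sig (a :: u) = sig (a' :: u') -> sig (rcons u b) = sig (rcons u' b') ->
  sig (a :: rcons u b) = sig (a' :: rcons u' b').

Definition sig_join (x y : F) : F :=
  epsilon (inhabits x) (fun z => exists a u b,
    [/\ sig (a :: u) = x, sig (rcons u b) = y & sig (a :: rcons u b) = z]).

Lemma sig_joinE a u b :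
  sig_join (sig (a :: u)) (sig (rcons u b)) = sig (a :: rcons u b).
Proof.
rewrite /sig_join; set P := fun z => _.
have [|a' [u' [b' [E1 E2 <-]]]] := epsilon_spec (inhabits (sig (a :: u))) P.
  by exists (sig (a :: rcons u b)), a, u, b.
exact: sig_cong.
Qed.

Definition sig_oca (acc : pred F) : OCA S :=
  @MkOCA S (option F : finType) (fun s => Some (sig [:: s])) None
    (fun p => if p is Some x then acc x else false)
    (fun p q => if (p, q) is (Some x, Some y) then Some (sig_join x y) else None).

Lemma sig_oca_conf acc w t i : i + t < size w ->
  conf (sig_oca acc) w t (i + t).+1 = Some (sig (take t.+1 (drop i w))).
Proof.
elim: t i => [|t IH] i lt_it_w.
  rewrite addn0 /=; have := onthTE w i.
  case w_i: (onth w i) => [s|] /= lt_i_w; last by lia.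
  by rewrite (drop_nth s) -?lt_i_w // (onth_nth s _ _ _ w_i) /= take0.
rewrite addnS /= -addSn !IH; try lia.
by have [a [u [b [-> -> ->]]]] := take_drop_succ lt_it_w; rewrite sig_joinE.
Qed.

Lemma Trellis_of_signature (L : seq S -> Prop) (acc : pred F) :
  ~ L [::] -> (forall w, w <> [::] -> L w <-> acc (sig w)) -> Trellis L.
Proof.
move=> L0 L_acc; split=> //; exists (sig_oca acc); split.
  by move=> s s' [/sig_letter_inj].
split=> // w w0; rewrite L_acc // /oca_accepts.
have size_w : 0 < size w by case: w w0.
have := @sig_oca_conf acc w (size w).-1 0; rewrite add0n prednK // => -> //.
by rewrite drop0 take_size; split=> /idP.
Qed.

End TrellisOfSignature.

(** * Least models of inclusion Horn formulas *)

Lemma hyp_holds_mono (S : finType) k (w : seq S) (R R' : 'I_k -> nat -> nat -> Prop) x y h :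
  (forall T p q, R T p q -> R' T p q) -> hyp_holds w R x y h -> hyp_holds w R' x y h.
Proof. by move=> RR'; case: h => //= T a b [/RR']. Qed.

Definition in_ctx (T : Type) (P : seq T -> nat -> nat -> Prop) (l c r : seq T) i j :=
  P (l ++ c ++ r) (size l + i) (size l + j).

Lemma in_ctx_rcons (T : Type) P (l c r : seq T) b i j :
  in_ctx P l (rcons c b) r i j = in_ctx P l c (b :: r) i j.
Proof. by rewrite /in_ctx cat_rcons. Qed.

Lemma in_ctx_cons (T : Type) P (l c r : seq T) a i j :
  in_ctx P l (a :: c) r i.+1 j.+1 = in_ctx P (rcons l a) c r i j.
Proof. by rewrite /in_ctx -cat_rcons size_rcons !addSnnS. Qed.

Section LeastModel.

Variables (S : finType) (Phi : formula S).
Implicit Types (w : seq S) (R : 'I_(nrel Phi) -> nat -> nat -> Prop).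

Definition closed w R := forall x y, 0 < x -> x <= y -> y <= size w ->
  forall c, List.In c (clauses Phi) -> forall T, Defs.head c = Some T ->
  (forall h, List.In h (body c) -> hyp_holds w R x y h) -> R T x y.

Definition least w T x y := forall R, closed w R -> R T x y.

Lemma least_closed w : closed w (least w).
Proof.
move=> x y x_gt0 le_xy le_yw c c_in T cT body R closed_R.
apply: (closed_R _ _ x_gt0 le_xy le_yw c c_in T cT) => h h_in.
by apply: hyp_holds_mono (body h h_in) => T' p q /(_ R closed_R).
Qed.

Lemma least_range w T x y : least w T x y -> [/\ 0 < x, x <= y & y <= size w].
Proof.
by move/(_ (fun _ x y => [/\ 0 < x, x <= y & y <= size w])); apply=> *; split.
Qed.

Definition violated w x y := exists c, [/\ List.In c (clauses Phi),
  Defs.head c = None & forall h, List.In h (body c) -> hyp_holds w (least w) x y h].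

Definition ctx_least l c r T := in_ctx (least^~ T) l c r.

Definition ctx_violated l c r :=
  exists i j, [/\ 0 < i, i <= j, j <= size c & in_ctx violated l c r i j].

Lemma models_iff w : models w Phi <-> ~ ctx_violated [::] w [::].
Proof.
rewrite /ctx_violated /in_ctx /= cats0.
split=> [[R HR] | no_violation].
  have closed_R : closed w R.
    move=> x y x_gt0 le_xy le_yw c c_in T cT body.
    by have := HR x y ltac:(lia) ltac:(lia) c c_in le_xy body; rewrite cT.
  move=> [x [y [x_gt0 le_xy le_yw [c [c_in cN body]]]]].
  have := HR (0 + x) (0 + y) ltac:(lia) ltac:(lia) c c_in ltac:(lia); rewrite cN; apply.
  by move=> h /body; apply: hyp_holds_mono => T p q /(_ R closed_R).
exists (least w) => x y x_in y_in c c_in le_xy body.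
case cT: (Defs.head c) => [T|]; first by apply: (least_closed _ le_xy _ c_in cT body); lia.
by apply: no_violation; exists x, y; rewrite !add0n; split=> //; [lia | lia | exists c].
Qed.

End LeastModel.

Arguments closed {S} Phi w R.
Arguments least {S} Phi w T x y.
Arguments violated {S} Phi w x y.
Arguments ctx_least {S} Phi l c r T i j.
Arguments ctx_violated {S} Phi l c r.

Lemma ctx_least_shrink (S : finType) (Phi : formula S) l c r T da db : db <= size c ->
  least Phi (l ++ c ++ r) T (size l + 1 + da) (size l + size c - db) =
  ctx_least Phi l c r T da.+1 (size c - db).
Proof. by move=> le_db; rewrite /ctx_least /in_ctx -addnA add1n addnBA. Qed.

Definition hyp_radius (S : Type) k (h : hyp S k) : nat :=
  match h with HLit _ _ _ a => absz a | HRel _ a b => a + b | _ => 0 end.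

Definition radius (S : Type) (Phi : formula S) : nat :=
  sumn [seq sumn (map (@hyp_radius S (nrel Phi)) (body c)) | c <- clauses Phi].

Lemma hyp_radius_le (S : Type) (Phi : formula S) c h :
  List.In c (clauses Phi) -> List.In h (body c) -> hyp_radius h <= radius Phi.
Proof.
move=> c_in h_in; apply: leq_trans (In_leq_sumn _ h_in) _.
exact: (In_leq_sumn (fun c => sumn (map _ (body c))) c_in).
Qed.

(** * Locality *)

(* Positions are counted from 1; position 0 and the positions beyond [size w]
   carry no letter, which is what makes [min] and [max] locally visible. *)
Definition letter (T : Type) (w : seq T) p : option T :=
  if p is q.+1 then onth w q else None.

Lemma letterTE (T : Type) (w : seq T) p : letter w p = (0 < p <= size w) :> bool.
Proof. by case: p => [|q] //=; rewrite onthTE. Qed.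

Lemma letter_cat (T : Type) (s t : seq T) p :
  letter (s ++ t) p =
  if p <= size s then onth (rev s) (size s - p) else onth t (p - size s - 1).
Proof.
case: p => [|q] /=; first by rewrite subn0 onth_default ?size_rev.
rewrite onth_cat; case: ltnP => [lt_q_s | _]; last by congr onth; lia.
by rewrite onth_rev; [congr onth | ]; lia.
Qed.

Section Windows.

Variables (T : Type) (A : nat).
Implicit Types w : seq T.

(* The windows of radius [A + 1] around [x1] in [w1] and around [x2] in [w2]
   coincide; the radius exceeds the offset bound [A] by one because [min] and
   [max] at a position are read off its neighbours. *)
Definition local_eq w1 w2 x1 x2 := forall p1 p2,
  p1 + x2 = p2 + x1 -> p1 <= x1 + A.+1 -> x1 <= p1 + A.+1 -> letter w1 p1 = letter w2 p2.

Lemma local_eq_range w1 w2 x1 x2 p1 p2 : local_eq w1 w2 x1 x2 ->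
  p1 + x2 = p2 + x1 -> p1 <= x1 + A.+1 -> x1 <= p1 + A.+1 ->
  (0 < p1 <= size w1) = (0 < p2 <= size w2).
Proof. by move=> loc e h1 h2; rewrite -!letterTE (loc p1 p2 e h1 h2). Qed.

Lemma local_eq_in w1 w2 x1 x2 : local_eq w1 w2 x1 x2 ->
  (0 < x1 <= size w1) = (0 < x2 <= size w2).
Proof. by move/local_eq_range; apply; lia. Qed.

Lemma local_eq_split s1 t1 s2 t2 e :
  take A.+2 (rev s1) = take A.+2 (rev s2) -> take A.+2 t1 = take A.+2 t2 -> e <= 1 ->
  local_eq (s1 ++ t1) (s2 ++ t2) (size s1 + e) (size s2 + e).
Proof.
move=> eq_s eq_t le_e1 p1 p2 e_p h1 h2; rewrite !letter_cat.
have -> : (p2 <= size s2) = (p1 <= size s1) by lia.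
case: ifP => le_p1.
  have -> : size s2 - p2 = size s1 - p1 by lia.
  by apply: (onth_take_eq eq_s); lia.
have -> : p2 - size s2 - 1 = p1 - size s1 - 1 by lia.
by apply: (onth_take_eq eq_t); lia.
Qed.

End Windows.

Section LocalSemantics.

Variables (S : finType) (A : nat).
Implicit Types w : seq S.

Lemma shift_local_eq w1 w2 x1 x2 a : local_eq A w1 w2 x1 x2 ->
  0 < x1 <= size w1 -> 0 < x2 <= size w2 -> absz a <= A ->
  shift (size w1) x1 a + x2 = shift (size w2) x2 a + x1.
Proof.
move=> loc x1_in x2_in; case: a => m /= le_mA.
  have := local_eq_range (p1 := x1 + m) (p2 := x2 + m) loc.
  case: (leqP (x1 + m) (size w1)) => le_w1 r_m; first by lia.
  have := local_eq_range (p1 := (size w1).+1) (p2 := (size w1).+1 + x2 - x1) loc.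
  have := local_eq_range (p1 := size w1) (p2 := size w1 + x2 - x1) loc.
  lia.
have := local_eq_range (p1 := 0) (p2 := x2 - x1) loc.
have := local_eq_range (p1 := x1 - x2) (p2 := 0) loc.
lia.
Qed.

Lemma upred_holds_local w1 w2 U s1 s2 :
  0 < s1 <= size w1 -> 0 < s2 <= size w2 -> letter w1 s1 = letter w2 s2 ->
  letter w1 s1.-1 = letter w2 s2.-1 -> letter w1 s1.+1 = letter w2 s2.+1 ->
  upred_holds w1 U s1 = upred_holds w2 U s2.
Proof.
move=> s1_in s2_in eq_s eq_pred eq_succ; case: U => [a||] /=.
- by case: s1 s2 s1_in s2_in eq_s {eq_pred eq_succ} => [|s1] [|s2] // _ _ /= ->.
- by move/(congr1 isSome): eq_pred; rewrite !letterTE; lia.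
- by move/(congr1 isSome): eq_succ; rewrite !letterTE; lia.
Qed.

Lemma upred_shift_local_eq w1 w2 x1 x2 a U : local_eq A w1 w2 x1 x2 ->
  0 < x1 <= size w1 -> 0 < x2 <= size w2 -> absz a <= A ->
  upred_holds w1 U (shift (size w1) x1 a) = upred_holds w2 U (shift (size w2) x2 a).
Proof.
move=> loc x1_in x2_in le_aA; have e := shift_local_eq loc x1_in x2_in le_aA.
have near : 0 < shift (size w1) x1 a <= size w1 /\
    shift (size w1) x1 a <= x1 + A /\ x1 <= shift (size w1) x1 a + A.
  by case: a le_aA {e} => m /=; lia.
have s2_in : 0 < shift (size w2) x2 a <= size w2 by case: a le_aA {e near} => m /=; lia.
by apply: upred_holds_local => //; try apply: loc; lia.
Qed.

Section HypTransfer.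

Variables (k : nat) (w1 w2 : seq S) (x1 y1 x2 y2 : nat).
Variables (R1 R2 : 'I_k -> nat -> nat -> Prop).

Hypotheses (x1_gt0 : 0 < x1) (le_xy1 : x1 <= y1) (y1_le : y1 <= size w1).
Hypotheses (le_xy2 : x2 <= y2) (eq_xy : (x1 == y1) = (x2 == y2)).
Hypotheses (loc_x : local_eq A w1 w2 x1 x2) (loc_y : local_eq A w1 w2 y1 y2).
Hypothesis R2_le : forall T p q, R2 T p q -> p <= q.
Hypothesis R12 : forall T da db, da <= A -> db <= A -> x1 + da <= y1 - db ->
  R1 T (x1 + da) (y1 - db) -> R2 T (x2 + da) (y2 - db).

Lemma hyp_holds_transfer h :
  hyp_radius h <= A -> hyp_holds w1 R1 x1 y1 h -> hyp_holds w2 R2 x2 y2 h.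
Proof.
have x2_in : 0 < x2 <= size w2 by rewrite -(local_eq_in loc_x); lia.
have y2_in : 0 < y2 <= size w2 by rewrite -(local_eq_in loc_y); lia.
case: h => [b U v a | | | T a b] /= le_hA.
- case: v => /=.
    by rewrite (upred_shift_local_eq _ loc_x) //; lia.
  by rewrite (upred_shift_local_eq _ loc_y) //; lia.
- by move/eqP; rewrite eq_xy => /eqP.
- move=> lt_xy1; suff : x2 != y2 by lia.
  by rewrite -eq_xy; lia.
move=> [R1_pq le_pq].
have e_p := shift_local_eq (a := Posz a) loc_x ltac:(lia) x2_in ltac:(simpl; lia).
have e_q : maxn (y1 - b) 1 + y2 = maxn (y2 - b) 1 + y1.
  case: b le_hA le_pq {R1_pq} => [|b] le_hA le_pq; first by lia.
  exact: (shift_local_eq (a := Negz b) loc_y ltac:(lia) y2_in ltac:(simpl; lia)).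
rewrite /= in e_p le_pq R1_pq *.
have := @R12 T (minn (x1 + a) (size w1) - x1) (y1 - maxn (y1 - b) 1).
rewrite subnKC ?subKn; try lia.
move=> /(_ ltac:(lia) ltac:(lia) le_pq R1_pq) R2_pq.
have -> : minn (x2 + a) (size w2) = x2 + (minn (x1 + a) (size w1) - x1) by lia.
have -> : maxn (y2 - b) 1 = y2 - (y1 - maxn (y1 - b) 1) by lia.
by split=> //; apply: R2_le R2_pq.
Qed.

End HypTransfer.

End LocalSemantics.

(** * Transfer of least facts between intervals *)

Section IntervalTransfer.

Variables (S : finType) (Phi : formula S) (A : nat).
Hypothesis radius_le : radius Phi <= A.
Variables (w1 w2 : seq S) (x1 y1 x2 y2 : nat).
Hypotheses (x1_gt0 : 0 < x1) (le_xy1 : x1 <= y1) (y1_le : y1 <= size w1).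
Hypotheses (le_xy2 : x2 <= y2) (eq_xy : (x1 == y1) = (x2 == y2)).
Hypotheses (loc_x : local_eq A w1 w2 x1 x2) (loc_y : local_eq A w1 w2 y1 y2).

Let least_le T p q : least Phi w2 T p q -> p <= q.
Proof. by case/least_range. Qed.

Lemma least_transfer_step :
  (forall T da db, da <= A -> db <= A -> 0 < da + db ->
     least Phi w1 T (x1 + da) (y1 - db) -> least Phi w2 T (x2 + da) (y2 - db)) ->
  forall T, least Phi w1 T x1 y1 -> least Phi w2 T x2 y2.
Proof.
move=> inner.
pose R T x y := least Phi w1 T x y /\ (x = x1 -> y = y1 -> least Phi w2 T x2 y2).
suff closed_R : closed Phi w1 R by move=> T /(_ R closed_R) [_]; apply.
move=> x y x_gt0 le_xy le_yw c c_in T cT body; split.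
  apply: (least_closed _ le_xy _ c_in cT) => // h /body.
  by apply: hyp_holds_mono => ? ? ? [].
move=> ex ey; subst x y.
have x2_in : 0 < x2 <= size w2 by rewrite -(local_eq_in loc_x); lia.
have y2_in : 0 < y2 <= size w2 by rewrite -(local_eq_in loc_y); lia.
apply: (least_closed _ le_xy2 _ c_in cT) => [||h h_in]; try lia.
apply: (hyp_holds_transfer x1_gt0 le_xy1 y1_le le_xy2 eq_xy loc_x loc_y least_le)
  (body h h_in); last exact: leq_trans (hyp_radius_le c_in h_in) radius_le.
move=> T' da db le_da le_db _ [fact full].
case: (posnP (da + db)) => [da_db0 | /inner]; last exact.
move: full; have [-> ->] : da = 0 /\ db = 0 by lia.
by rewrite !addn0 !subn0 => /(_ erefl erefl).
Qed.

Lemma violated_transfer :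
  (forall T da db, da <= A -> db <= A ->
     least Phi w1 T (x1 + da) (y1 - db) -> least Phi w2 T (x2 + da) (y2 - db)) ->
  violated Phi w1 x1 y1 -> violated Phi w2 x2 y2.
Proof.
move=> facts [c [c_in cN body]]; exists c; split=> // h h_in.
apply: (hyp_holds_transfer x1_gt0 le_xy1 y1_le le_xy2 eq_xy loc_x loc_y least_le)
  (body h h_in) => [T da db le_da le_db _ |]; first exact: facts.
exact: leq_trans (hyp_radius_le c_in h_in) radius_le.
Qed.

End IntervalTransfer.

Section ContextTransfer.

Variables (S : finType) (Phi : formula S) (A : nat).
Hypothesis radius_le : radius Phi <= A.
Variables (l c r l' r' : seq S).
Hypotheses (eq_l : take A.+2 (rev l) = take A.+2 (rev l')) (eq_r : take A.+2 r = take A.+2 r').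

Lemma local_eq_ctx i : 0 < i <= size c ->
  local_eq A (l ++ c ++ r) (l' ++ c ++ r') (size l + i) (size l' + i).
Proof.
move=> i_in; have split_at u v : u ++ c ++ v = (u ++ take i c) ++ (drop i c ++ v).
  by rewrite -catA (catA (take i c)) cat_take_drop.
have size_pre u : size u + i = size (u ++ take i c) + 0.
  by rewrite addn0 size_cat size_takel //; lia.
rewrite !split_at !size_pre; apply: local_eq_split => //.
  by rewrite !rev_cat; apply: take_cat_eq.
exact: take_cat_eq.
Qed.

Lemma ctx_least_transfer T i j : 0 < i -> j <= size c ->
  ctx_least Phi l c r T i j -> ctx_least Phi l' c r' T i j.
Proof.
have [n] := ubnP (j - i); elim: n => // n IH in T i j *.
move=> lt_n i_gt0 le_jc fact; have [_ le_ij _] := least_range fact.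
apply: (least_transfer_step radius_le _ _ _ _ _
  (@local_eq_ctx i _) (@local_eq_ctx j _)) fact; rewrite ?size_cat; try lia.
move=> T' da db le_da le_db da_db sub; have [_ le_sub _] := least_range sub.
have e u : size u + j - db = size u + (j - db) by lia.
by rewrite !e -!addnA in sub *; apply: IH sub; lia.
Qed.

Lemma ctx_violated_transfer : ctx_violated Phi l c r -> ctx_violated Phi l' c r'.
Proof.
move=> [i [j [i_gt0 le_ij le_jc viol]]]; exists i, j; split=> //.
apply: (violated_transfer radius_le _ _ _ _ _
  (@local_eq_ctx i _) (@local_eq_ctx j _)) viol; rewrite ?size_cat; try lia.
move=> T da db le_da le_db sub; have [_ le_sub _] := least_range sub.
have e u : size u + j - db = size u + (j - db) by lia.
by rewrite !e -!addnA in sub *; apply: ctx_least_transfer sub; lia.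
Qed.

End ContextTransfer.

(** * Signatures of factors *)

Section Signature.

Variables (S : finType) (Phi : formula S).
Local Notation A := (radius Phi).
Local Notation K := (radius Phi).+2.
Local Notation table := ({ffun 'I_A.+1 * 'I_A.+1 * 'I_(nrel Phi) -> bool} * bool)%type.

(* Entry [(da, db, T)] records the fact [T] on the interval of [u] shrunk by
   [da] on the left and [db] on the right. *)
Definition ctx_table (u l r : seq S) : table :=
  ([ffun e : 'I_A.+1 * 'I_A.+1 * 'I_(nrel Phi) =>
      truth (ctx_least Phi l u r e.2 e.1.1.+1 (size u - e.1.2))],
   truth (ctx_violated Phi l u r)).

(* Left contexts are stored reversed, so that [take] keeps the letters next to [u]. *)
Definition signature (u : seq S) :=
  (take_bseq K u, take_bseq K (rev u),
   [ffun lr : K.-bseq S * K.-bseq S => ctx_table u (rev lr.1) lr.2]).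

(* The entry for empty contexts tells whether a [⊥]-clause is violated in the word itself. *)
Definition signature_accepts
    (x : K.-bseq S * K.-bseq S * {ffun K.-bseq S * K.-bseq S -> table}) : bool :=
  ~~ (x.2 ([bseq], [bseq])).2.

Lemma ctx_table_eq u l r u' l' r' : ctx_table u l r = ctx_table u' l' r' <->
  (forall T da db, da <= A -> db <= A ->
     ctx_least Phi l u r T da.+1 (size u - db) <-> ctx_least Phi l' u' r' T da.+1 (size u' - db))
  /\ (ctx_violated Phi l u r <-> ctx_violated Phi l' u' r').
Proof.
split=> [[/ffunP eq_least /truth_eq eq_viol] | [eq_least eq_viol]].
  split=> // T da db le_da le_db.
  by have := eq_least (inord da, inord db, T); rewrite !ffunE /= !inordK // => /truth_eq.
congr pair; last exact/truth_eq.
by apply/ffunP => -[[da db] T]; rewrite !ffunE; apply/truth_eq/eq_least; rewrite -ltnS.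
Qed.

Lemma ctx_table_trunc u l r :
  ctx_table u l r = ctx_table u (rev (take K (rev l))) (take K r).
Proof.
have eq_l : take K (rev l) = take K (rev (rev (take K (rev l)))) by rewrite revK take_takel.
have eq_r : take K r = take K (take K r) by rewrite take_takel.
apply/ctx_table_eq; split=> [T da db _ _|]; split.
- by apply: (ctx_least_transfer (leqnn _) eq_l eq_r) => //; apply: leq_subr.
- by apply: (ctx_least_transfer (leqnn _) (esym eq_l) (esym eq_r)) => //; apply: leq_subr.
- exact: (ctx_violated_transfer (leqnn _) eq_l eq_r).
- exact: (ctx_violated_transfer (leqnn _) (esym eq_l) (esym eq_r)).
Qed.

Lemma signature_ctx_table u u' l r :
  signature u = signature u' -> ctx_table u l r = ctx_table u' l r.
Proof.
case=> _ _ /ffunP /(_ (take_bseq K (rev l), take_bseq K r)); rewrite !ffunE /= => eq_table.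
by rewrite ctx_table_trunc eq_table -ctx_table_trunc.
Qed.

Lemma signature_take u u' : signature u = signature u' ->
  take K u = take K u' /\ take K (rev u) = take K (rev u').
Proof. by case=> -> ->. Qed.

End Signature.

Section Congruence.

Variables (S : finType) (Phi : formula S).
Local Notation A := (radius Phi).
Local Notation K := (radius Phi).+2.

Variables (a b : S) (u u' : seq S).
Hypotheses (sig_au : signature Phi (a :: u) = signature Phi (a :: u'))
  (sig_ub : signature Phi (rcons u b) = signature Phi (rcons u' b)).
Local Notation v := (a :: rcons u b).
Local Notation v' := (a :: rcons u' b).

Lemma take_cong : take K v = take K v'.
Proof.
have [eq_ub _] := signature_take sig_ub.
by congr cons; rewrite -[LHS](take_takel _ (leqnSn _)) eq_ub take_takel.
Qed.

Lemma take_rev_cong : take K (rev v) = take K (rev v').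
Proof.
have [_ eq_au] := signature_take sig_au.
rewrite -!rcons_cons !rev_rcons; congr cons.
by rewrite -[LHS](take_takel _ (leqnSn _)) eq_au take_takel.
Qed.

Hypothesis long_v : K <= size v.

Lemma long_cong : K <= size v'.
Proof. by have := congr1 size take_cong; rewrite !size_take_min; lia. Qed.

Lemma local_eq_cong_first l r :
  local_eq A (l ++ v ++ r) (l ++ v' ++ r) (size l + 1) (size l + 1).
Proof.
by apply: local_eq_split => //; rewrite !takel_cat ?take_cong //; apply: long_cong.
Qed.

Lemma local_eq_cong_last l r :
  local_eq A (l ++ v ++ r) (l ++ v' ++ r) (size l + size v) (size l + size v').
Proof.
have := @local_eq_split _ A (l ++ v) r (l ++ v') r 0.
rewrite !size_cat !addn0 -!catA; apply=> //.
by rewrite !rev_cat !takel_cat ?size_rev ?take_rev_cong //; apply: long_cong.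
Qed.

Lemma ctx_least_cong_proper l r T da db : da <= A -> db <= A -> 0 < da + db ->
  ctx_least Phi l v r T da.+1 (size v - db) -> ctx_least Phi l v' r T da.+1 (size v' - db).
Proof.
have /ctx_table_eq[least_au _] := signature_ctx_table l (b :: r) sig_au.
have /ctx_table_eq[least_ub _] := signature_ctx_table (rcons l a) r sig_ub.
(* Either the shrunk interval lies in [rcons u b] ([db = 0]) or in [a :: u]. *)
case: db => [|db] le_da le_db da_db.
  case: da le_da da_db => [|da] // le_da _; rewrite !subn0 /ctx_least /= !in_ctx_cons.
  by have := least_ub T da 0 (ltnW le_da) isT; rewrite !subn0 => -[].
rewrite /ctx_least -!rcons_cons !in_ctx_rcons !size_rcons !subSS.
by have [] := least_au T da db le_da (ltnW le_db).
Qed.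

Lemma ctx_least_cong l r T da db : da <= A -> db <= A ->
  ctx_least Phi l v r T da.+1 (size v - db) -> ctx_least Phi l v' r T da.+1 (size v' - db).
Proof.
move=> le_da le_db; case: (posnP (da + db)); last exact: ctx_least_cong_proper.
move/eqP; rewrite addn_eq0 => /andP[/eqP-> /eqP->] {le_da le_db da db}.
have long_v' := long_cong.
rewrite -!ctx_least_shrink // !addn0 !subn0.
apply: (least_transfer_step (leqnn _) _ _ _ _ _ (@local_eq_cong_first l r)
  (@local_eq_cong_last l r)); rewrite ?size_cat; try lia.
move=> T' da db le_da le_db da_db; rewrite !ctx_least_shrink; try lia.
exact: ctx_least_cong_proper.
Qed.

Lemma ctx_violated_cong l r : ctx_violated Phi l v r -> ctx_violated Phi l v' r.
Proof.
have /ctx_table_eq[_ viol_au] := signature_ctx_table l (b :: r) sig_au.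
have /ctx_table_eq[_ viol_ub] := signature_ctx_table (rcons l a) r sig_ub.
move=> [i [j [i_gt0 le_ij le_jv viol]]].
case: (ltnP 1 i) => [lt_1i | le_i1]; last case: (ltnP j (size v)) => [lt_jv | ge_jv].
- case: i j lt_1i le_ij le_jv viol {i_gt0} => [|i] [|j] //= lt_1i le_ij le_jv.
  rewrite in_ctx_cons => viol.
  have /viol_ub [i' [j' [i'_gt0 le_ij' le_j'u viol']]] : ctx_violated Phi (rcons l a) (rcons u b) r.
    by exists i, j.
  by exists i'.+1, j'.+1; rewrite in_ctx_cons.
- rewrite /= size_rcons ltnS in lt_jv.
  have /viol_au [i' [j' [i'_gt0 le_ij' le_j'u]]] : ctx_violated Phi l (a :: u) (b :: r).
    by exists i, j; rewrite -in_ctx_rcons.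
  rewrite -in_ctx_rcons => viol'; exists i', j'; split=> //.
  by rewrite /= size_rcons ltnW.
have long_v' := long_cong.
have [ei ej] : i = 1 /\ j = size v by lia.
subst i j; exists 1, (size v'); split => //.
apply: (violated_transfer (leqnn _) _ _ _ _ _ (@local_eq_cong_first l r)
  (@local_eq_cong_last l r)) viol; rewrite ?size_cat; try lia.
move=> T da db le_da le_db; rewrite !ctx_least_shrink; try lia.
exact: ctx_least_cong.
Qed.

End Congruence.

Lemma signature_cong (S : finType) (Phi : formula S) a u b a' u' b' :
  signature Phi (a :: u) = signature Phi (a' :: u') ->
  signature Phi (rcons u b) = signature Phi (rcons u' b') ->
  signature Phi (a :: rcons u b) = signature Phi (a' :: rcons u' b').
Proof.
move=> sig_au sig_ub.
have [/(congr1 (head a)) /= eq_a _] := signature_take sig_au.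
have [_] := signature_take sig_ub; rewrite !rev_rcons => /(congr1 (head b)) /= eq_b.
subst a' b'; case: (ltnP (size (a :: rcons u b)) (radius Phi).+2) => [short | long].
  by rewrite (take_eq_short (take_cong a sig_ub) short).
have long' := long_cong sig_ub long.
congr (_, _, _); first exact/val_inj/take_cong.
  exact/val_inj/take_rev_cong.
apply/ffunP => lr; rewrite !ffunE; apply/ctx_table_eq.
split=> [T da db le_da le_db|]; split.
- exact: (ctx_least_cong sig_au sig_ub long le_da le_db).
- exact: (ctx_least_cong (esym sig_au) (esym sig_ub) long' le_da le_db).
- exact: (ctx_violated_cong sig_au sig_ub long).
- exact: (ctx_violated_cong (esym sig_au) (esym sig_ub) long').
Qed.

Lemma models_signature (S : finType) (Phi : formula S) w :
  models w Phi <-> signature_accepts (signature Phi w).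
Proof.
rewrite models_iff /signature_accepts ffunE /=.
by split=> [no_viol | /negP no_viol /truthP //]; apply/negP => /truthP.
Qed.

Lemma signature_letter_inj (S : finType) (Phi : formula S) s s' :
  signature Phi [:: s] = signature Phi [:: s'] -> s = s'.
Proof. by case/signature_take => -[]. Qed.

Theorem lemma10 (S : finType) (L : seq S -> Prop) :
  incl_ESO_HORN L -> Trellis L.
Proof.
move=> [L0 [Phi L_Phi]].
apply: (Trellis_of_signature (@signature_letter_inj S Phi) (@signature_cong S Phi)
  (acc := @signature_accepts S Phi)) => // w w0.
by rewrite L_Phi // models_signature.
Qed.
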